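(* Let $\mathbb S[\boldsymbol\kappa]$ be an unstable-negative feedback that is a $P^-_{FF}$ matrix. Then $\mathbb S[\boldsymbol\kappa]$ is $D$-Hopf.
   Context: For a reaction network with reactant coefficients $s^j_m$ and stoichiometric matrix $\mathbb S$, a $k$-Child-Selection $\boldsymbol\kappa=(\kappa,E_\kappa,J)$ is a bijection $J:\kappa\to E_\kappa$ between $k$ species and $k$ reactions with $s^{J(m)}_m>0$; its CS-matrix is $\mathbb S[\boldsymbol\kappa]_{ml}=\mathbb S_{m,J(l)}$. An unstable core is a Hurwitz-unstable (some eigenvalue with positive real part) CS-matrix with no Hurwitz-unstable proper principal submatrix; a $k\times k$ unstable core with $\operatorname{sign}\det=(-1)^k$ is an unstable-negative feedback. $P^-_0$ matrix: every nonzero $j\times j$ principal minor has sign $(-1)^j$. An $n\times n$ $P^-_0$ matrix is $P^-_{FF}$ if it has a nested sequence of invertible principal submatrices $A[\kappa_1]\subset\dots\subset A[\kappa_n]$ with $|\kappa_i|=i$. Inertia: numbers of eigenvalues with negative, positive, zero real part. $A$ is $D$-Hopf if there exist an invertible principal submatrix $A[\kappa]$ and positive diagonal $D_1,D_2$ with $\operatorname{inertia}(A[\kappa]D_1)\ne\operatorname{inertia}(A[\kappa]D_2)$. *)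

(* Real matrices over an arbitrary real closed field R;
   eigenvalues are taken in the algebraic closure R[i] (complex R). *)
From HB Require Import structures.
From mathcomp Require Import all_boot all_order all_algebra.
From mathcomp Require Import complex.
Set Implicit Arguments. Unset Strict Implicit. Unset Printing Implicit Defensive.
Import Order.TTheory GRing.Theory Num.Theory.
Local Open Scope ring_scope.

Section Defs.
Variable R : rcfType.

Definition cplx n (A : 'M[R]_n) : 'M[R[i]]_n :=
  map_mx (fun x : R => Complex x 0) A.

(* principal submatrix A[K] for an index set K (indices in increasing order) *)
Definition psub n (A : 'M[R]_n) (K : {set 'I_n}) : 'M[R]_#|K| :=
  \matrix_(i, j) A (enum_val i) (enum_val j).

Definition eigs n (A : 'M[R]_n) : seq R[i] :=
  sval (closed_field_poly_normal (char_poly (cplx A))).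

Definition inertia n (A : 'M[R]_n) : nat * nat * nat :=
  (count (fun z : R[i] => Re z < 0) (eigs A),
   count (fun z : R[i] => 0 < Re z) (eigs A),
   count (fun z : R[i] => Re z == 0) (eigs A)).

Definition hurwitz_unstable n (A : 'M[R]_n) : Prop :=
  exists z : R[i], root (char_poly (cplx A)) z /\ 0 < Re z.

Definition unstable_core n (A : 'M[R]_n) : Prop :=
  hurwitz_unstable A /\
  forall K : {set 'I_n}, K \proper setT -> ~ hurwitz_unstable (psub A K).

Definition unstable_negative_feedback n (A : 'M[R]_n) : Prop :=
  unstable_core A /\ \det A != 0 /\ Num.sg (\det A) = (-1) ^+ n.

Definition P0minus n (A : 'M[R]_n) : Prop :=
  forall K : {set 'I_n}, \det (psub A K) != 0 ->
    Num.sg (\det (psub A K)) = (-1) ^+ #|K|.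

Definition PFFminus n (A : 'M[R]_n) : Prop :=
  P0minus A /\
  exists kap : nat -> {set 'I_n},
    (forall i, (1 <= i <= n)%N ->
       #|kap i| = i /\ \det (psub A (kap i)) != 0) /\
    (forall i, (1 <= i < n)%N -> kap i \subset kap i.+1).

Definition posdiag n (D : 'M[R]_n) : Prop :=
  exists d : 'rV[R]_n, D = diag_mx d /\ forall i, 0 < d 0 i.

Definition DHopf n (A : 'M[R]_n) : Prop :=
  exists K : {set 'I_n}, \det (psub A K) != 0 /\
  exists D1 D2 : 'M[R]_#|K|, posdiag D1 /\ posdiag D2 /\
    inertia (psub A K *m D1) <> inertia (psub A K *m D2).

(* Reaction network with M species and E reactions: reactant coefficients
   s m j = s^j_m, stoichiometric matrix S.  A k-Child-Selection is given by an
   injective enumeration kap of the k species of kappa together with the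
   bijection J (as an injective map into reactions, E_kappa = image of J). *)
Definition child_selection M E k (s : 'M[R]_(M, E))
    (kap : 'I_k -> 'I_M) (J : 'I_k -> 'I_E) : Prop :=
  injective kap /\ injective J /\ forall m, 0 < s (kap m) (J m).

Definition CSmatrix M E k (S : 'M[R]_(M, E))
    (kap : 'I_k -> 'I_M) (J : 'I_k -> 'I_E) : 'M[R]_k :=
  \matrix_(m, l) S (kap m) (J l).

End Defs.

From HB Require Import structures.
From mathcomp Require Import all_boot all_order all_algebra.
From mathcomp Require Import complex.
From mathcomp Require Import fingroup perm.
From mathcomp Require Import ring.
Set Implicit Arguments. Unset Strict Implicit. Unset Printing Implicit Defensive.
Import Order.TTheory GRing.Theory Num.Theory.
Local Open Scope ring_scope.

(* Along the nested chain A[kappa_1] < ... < A[kappa_n] of a P^-_FF matrix,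
   consecutive principal minors have opposite signs.  This lets us build,
   one index at a time, a positive diagonal D with A D Hurwitz stable: if
   C D is stable and det B * det C < 0, where C is B with its last index
   removed, then the characteristic polynomial of B diag(D, t) is
   X chi(C D) - t h with h(0) / chi(C D)(0) = det B / det C < 0, so for small
   t > 0 the root of X chi(C D) at 0 moves into the left half-plane while the
   other roots stay there.  Since A = A I is unstable and A D is stable, the
   inertias of A I and A D differ. *)

Definition hurwitz_poly (C : numClosedFieldType) (p : {poly C}) : Prop :=
  forall z, root p z -> 'Re z < 0.

Definition coefnorm (F : numDomainType) (p : {poly F}) : F :=
  \sum_(i < size p) `|p`_i|.

Section CoefNorm.
Variables (F : numDomainType) (p : {poly F}).

Lemma coefnorm_ge0 : 0 <= coefnorm p.
Proof. by apply: sumr_ge0 => i _. Qed.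

Lemma norm_horner_le (z : F) k :
  (size p <= k.+1)%N -> `|p.[z]| <= coefnorm p * (1 + `|z|) ^+ k.
Proof.
move=> size_p; rewrite horner_coef mulr_suml.
apply: le_trans (ler_norm_sum _ _ _) _; apply: ler_sum => i _.
rewrite normrM normrX ler_wpM2l //.
have z1 : 1 <= 1 + `|z| by rewrite lerDl.
apply: le_trans (ler_weXn2l z1 (_ : i <= k)%N); last first.
  by rewrite -ltnS (leq_trans (ltn_ord i)).
by rewrite lerXn2r ?nnegrE ?(le_trans ler01 z1) // lerDr.
Qed.

Lemma norm_horner_le_norm (z : F) :
  p.[0] = 0 -> `|z| <= 1 -> `|p.[z]| <= coefnorm p * `|z|.
Proof.
move=> p0 z1; rewrite horner_coef mulr_suml.
apply: le_trans (ler_norm_sum _ _ _) _; apply: ler_sum => -[[|i] lti] _ /=.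
  by rewrite -horner_coef0 p0 mul0r normr0 mul0r.
by rewrite normrM normrX ler_wpM2l // ler_iXnr.
Qed.

End CoefNorm.

Lemma exists_pos_small (F : numFieldType) (a b e : F) :
  0 <= a -> 0 <= b -> 0 < e -> exists2 t, 0 < t & t * a <= 1 /\ t * b < e.
Proof.
move=> a0 b0 e0.
have a1 : 0 < 1 + a by apply: ltr_pwDl.
have b1 : 0 < 1 + b by apply: ltr_pwDl.
have e1 : 0 < 1 + e by apply: ltr_pwDl; last exact: ltW.
set D := (1 + e) * ((1 + a) * (1 + b)).
have D0 : 0 < D by rewrite !mulr_gt0.
exists (e / D); first by rewrite divr_gt0.
rewrite [e / D * a]mulrAC [e / D * b]mulrAC ler_pdivrMr // ltr_pdivrMr // mul1r.
have le1 (x : F) : 0 <= x -> 1 <= 1 + x by move=> x0; rewrite lerDl.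
have le_D : 1 + b <= D.
  rewrite /D mulrA ler_peMl ?(ltW b1) //.
  by apply: mulr_ege1; apply: le1; rewrite // ltW.
split.
  apply: ler_pM => //; first by rewrite ltW.
    by rewrite lerDr.
  by rewrite -[X in X <= _]mulr1 ler_pM // ?lerDr ?le1.
by rewrite ltr_pM2l // (lt_le_trans _ le_D) // ltrDr.
Qed.

Section HurwitzPoly.
Variable C : numClosedFieldType.
Implicit Types (z mu : C) (q h : {poly C}).

Lemma norm_sub_ge_Re_neg mu : 'Re mu < 0 ->
  exists2 c, 0 < c & forall z, 0 <= 'Re z -> c * (1 + `|z|) <= `|z - mu|.
Proof.
move=> Re_mu; set r := - 'Re mu; have r0 : 0 < r by rewrite oppr_gt0.
have D0 : 0 < 1 + `|mu| + r by rewrite ltr_pwDr // addr_ge0.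
exists (r / (1 + `|mu| + r)) => [|z Re_z]; first by rewrite divr_gt0.
set a : C := `|z - mu|.
have r_a : r <= a.
  apply: le_trans (leif_Re_Creal (z - mu)).1.
  by rewrite raddfB /= lerDr.
have z_a : `|z| <= a + `|mu| by rewrite -{1}(subrK mu z) ler_normD.
rewrite mulrAC ler_pdivrMr //.
apply: le_trans (_ : r * (1 + (a + `|mu|)) <= _); first by rewrite ler_wpM2l ?lerD2l // ltW.
have -> : r * (1 + (a + `|mu|)) = r * (1 + `|mu|) + r * a by ring.
have -> : a * (1 + `|mu| + r) = a * (1 + `|mu|) + r * a by ring.
by rewrite lerD2r ler_wpM2r // addr_ge0.
Qed.

Lemma norm_prod_XsubC_ge (s : seq C) : all (fun mu => 'Re mu < 0) s ->
  exists2 Q, 0 < Q & forall z, 0 <= 'Re z ->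
    Q * (1 + `|z|) ^+ size s <= `|(\prod_(mu <- s) ('X - mu%:P)).[z]|.
Proof.
elim: s => [|mu s IH] /= => [_|/andP [/norm_sub_ge_Re_neg [c c0 hc] /IH [Q Q0 hQ]]].
  by exists 1 => // z _; rewrite big_nil hornerC normr1 expr0 mulr1.
exists (c * Q) => [|z Re_z]; first exact: mulr_gt0.
rewrite big_cons hornerM hornerXsubC normrM exprS mulrACA.
have z_ge0 : 0 <= 1 + `|z| by rewrite addr_ge0.
by apply: ler_pM; rewrite ?hc ?hQ // mulr_ge0 ?exprn_ge0 // ltW.
Qed.

Lemma hurwitz_poly_norm_ge q : q != 0 -> hurwitz_poly q ->
  exists2 Q, 0 < Q & forall z, 0 <= 'Re z -> Q * (1 + `|z|) ^+ (size q).-1 <= `|q.[z]|.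
Proof.
move=> q0 q_hurwitz; have [s q_eq] := closed_field_poly_normal q.
have s_neg : all (fun mu => 'Re mu < 0) s.
  apply/allP => mu mu_s; apply: q_hurwitz.
  by rewrite q_eq rootZ ?lead_coef_eq0 // root_prod_XsubC.
have [Q Q0 hQ] := norm_prod_XsubC_ge s_neg.
exists (`|lead_coef q| * Q) => [|z Re_z]; first by rewrite mulr_gt0 ?normr_gt0 ?lead_coef_eq0.
rewrite [in X in _ <= X]q_eq hornerZ normrM -mulrA ler_wpM2l //.
by rewrite q_eq size_scale ?lead_coef_eq0 // size_prod_XsubC hQ.
Qed.
End HurwitzPoly.

Section HurwitzPerturbation.
Variable C : numClosedFieldType.
Variables q h : {poly C}.
Hypotheses (q_neq0 : q != 0) (q_hurwitz : hurwitz_poly q).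
Hypothesis size_h : (size h <= size q)%N.

Lemma hurwitz_horner_neq0 z : 0 <= 'Re z -> q.[z] != 0.
Proof. by move=> Re_z; apply/negP => /q_hurwitz /lt_geF; rewrite Re_z. Qed.

Lemma hurwitz_ratio_bounded :
  exists2 L, 0 <= L & forall z, 0 <= 'Re z -> `|h.[z]| <= L * `|q.[z]|.
Proof.
have [Q Q0 hQ] := hurwitz_poly_norm_ge q_neq0 q_hurwitz.
exists (coefnorm h / Q) => [|z Re_z]; first by rewrite divr_ge0 ?coefnorm_ge0 ?ltW.
rewrite mulrAC ler_pdivlMr //.
apply: le_trans (_ : coefnorm h * (1 + `|z|) ^+ (size q).-1 * Q <= _).
  by rewrite ler_wpM2r ?(ltW Q0) // norm_horner_le // prednK ?size_poly_gt0.
by rewrite -mulrA ler_wpM2l ?coefnorm_ge0 // mulrC hQ.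
Qed.

Lemma hurwitz_ratio_near0 :
  exists2 L, 0 <= L & forall z, 0 <= 'Re z -> `|z| <= 1 ->
    `|h.[z] / q.[z] - h.[0] / q.[0]| <= L * `|z|.
Proof.
have [Q Q0 hQ] := hurwitz_poly_norm_ge q_neq0 q_hurwitz.
have q0 : q.[0] != 0 by rewrite hurwitz_horner_neq0 // raddf0.
set w := h * q.[0]%:P - h.[0]%:P * q.
have w0 : w.[0] = 0 by rewrite /w !hornerE mulrC subrr.
exists (coefnorm w / (Q * `|q.[0]|)) => [|z Re_z z1].
  by rewrite divr_ge0 ?coefnorm_ge0 // mulr_ge0 // ltW.
have qz := hurwitz_horner_neq0 Re_z.
have Q_qz : Q <= `|q.[z]|.
  apply: le_trans (hQ z Re_z); rewrite ler_peMr ?(ltW Q0) // exprn_ege1 //.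
  by rewrite lerDl.
have -> : h.[z] / q.[z] - h.[0] / q.[0] = w.[z] / (q.[z] * q.[0]).
  by rewrite /w !hornerE; field; rewrite qz q0.
rewrite normrM normfV normrM ler_pdivrMr ?mulr_gt0 ?normr_gt0 //.
have -> : coefnorm w / (Q * `|q.[0]|) * `|z| * (`|q.[z]| * `|q.[0]|) =
          coefnorm w * `|z| * (`|q.[z]| / Q).
  by field; rewrite normr_eq0 q0 lt0r_neq0.
apply: le_trans (norm_horner_le_norm w0 z1) _.
by rewrite ler_peMr ?mulr_ge0 ?coefnorm_ge0 // ler_pdivlMr // mul1r.
Qed.

(* A root z with 0 <= Re z satisfies z = t h(z)/q(z); the ratio is bounded,
   so |z| <= t L is small, and then h(z)/q(z) is close to h(0)/q(0), whose
   real part is negative, forcing Re z < 0. *)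
Theorem hurwitz_poly_perturbation : 'Re (h.[0] / q.[0]) < 0 ->
  exists2 t, 0 < t & hurwitz_poly ('X * q - t%:P * h).
Proof.
move=> Re_g0; set g0 := h.[0] / q.[0] in Re_g0 *.
have [L L0 hL] := hurwitz_ratio_bounded.
have [K K0 hK] := hurwitz_ratio_near0.
have eps0 : 0 < - 'Re g0 by rewrite oppr_gt0.
have [t t0 [tL tKL]] := exists_pos_small L0 (mulr_ge0 K0 L0) eps0.
exists t => // z; rewrite rootE !hornerE subr_eq0 => /eqP z_eq.
rewrite real_ltNge ?Creal_Re ?real0 //; apply/negP => Re_z.
have qz := hurwitz_horner_neq0 Re_z.
have z_tL : `|z| <= t * L.
  rewrite -(ler_pM2r (_ : 0 < `|q.[z]|)) ?normr_gt0 //.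
  by rewrite -normrM z_eq normrM gtr0_norm // -mulrA ler_wpM2l ?hL // ltW.
have z_ratio : z = t * (h.[z] / q.[z]) by rewrite mulrA -z_eq mulfK.
have Re_ratio : 'Re (h.[z] / q.[z]) < 0.
  rewrite -[_ / _](subrK g0) raddfD /= -(addNr ('Re g0)) ltrD2r.
  apply: le_lt_trans (leif_Re_Creal _).1 _; apply: le_lt_trans tKL.
  apply: le_trans (hK z Re_z (le_trans z_tL tL)) _.
  by rewrite mulrCA ler_wpM2l.
have := Re_ratio; rewrite -(pmulr_rlt0 _ t0) -ReMl ?gtr0_real // -z_ratio.
by move/lt_geF; rewrite Re_z.
Qed.
End HurwitzPerturbation.

Definition extlast (T : Type) m (f : 'I_m -> T) (x : T) : 'I_m.+1 -> T :=
  fun j => if unlift ord_max j is Some a then f a else x.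

Section ExtLast.
Variables (T : Type) (m : nat) (f : 'I_m -> T) (x : T).

Lemma extlast_lift a : extlast f x (lift ord_max a) = f a.
Proof. by rewrite /extlast liftK. Qed.

Lemma extlast_max : extlast f x ord_max = x.
Proof. by rewrite /extlast unlift_none. Qed.

End ExtLast.

Lemma extlast_inj (T : eqType) m (f : 'I_m -> T) x :
  injective f -> x \notin codom f -> injective (extlast f x).
Proof.
move=> f_inj x_f j1 j2.
case: (unliftP ord_max j1) => [a1 ->|->]; case: (unliftP ord_max j2) => [a2 ->|->];
  rewrite ?extlast_lift ?extlast_max //.
- by move/f_inj ->.
- by move=> eq_x; move: x_f; rewrite -eq_x codom_f.
- by move=> eq_x; move: x_f; rewrite eq_x codom_f.
Qed.

Lemma prod_extlast (F : comNzRingType) m (d : 'I_m -> F) t :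
  \prod_i extlast d t i = (\prod_i d i) * t.
Proof.
rewrite big_ord_recr /= extlast_max; congr (_ * _); apply: eq_bigr => i _.
by rewrite (_ : widen_ord _ i = lift ord_max i) ?extlast_lift //; exact/val_inj/esym/lift_max.
Qed.

Definition diagf (F : comNzRingType) m (d : 'I_m -> F) : 'M[F]_m := diag_mx (\row_i d i).

Lemma mxsub_mul_diagf (F : comNzRingType) n m (A : 'M[F]_n) (d : 'I_n -> F)
    (f : 'I_m -> 'I_n) :
  mxsub f f (A *m diagf d) = mxsub f f A *m diagf (d \o f).
Proof. by apply/matrixP => i j; rewrite !mul_mx_diag !mxE. Qed.

Lemma det_mul_diagf (F : comNzRingType) n (A : 'M[F]_n) (d : 'I_n -> F) :
  \det (A *m diagf d) = \det A * \prod_i d i.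
Proof. by rewrite det_mulmx det_diag; congr (_ * _); apply: eq_bigr => i _; rewrite mxE. Qed.

Lemma det_mxsub_perm (F : comNzRingType) n (s : 'S_n) (A : 'M[F]_n) :
  \det (mxsub s s A) = \det A.
Proof.
have -> : mxsub s s A = perm_mx s *m A *m perm_mx s^-1.
  by rewrite -row_permE -col_permE; apply/matrixP => i j; rewrite !mxE.
by rewrite !det_mulmx !det_perm odd_permV mulrC mulrA -signr_addb addbb mul1r.
Qed.

Lemma char_poly_mxsub_perm (F : comNzRingType) n (s : 'S_n) (A : 'M[F]_n) :
  char_poly (mxsub s s A) = char_poly A.
Proof.
rewrite /char_poly -(det_mxsub_perm s (char_poly_mx A)); congr (\det _).
by apply/matrixP => i j; rewrite !mxE (inj_eq perm_inj).
Qed.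

Lemma det_mxsub_inj (F : comNzRingType) n m (A : 'M[F]_n) (g : 'I_m -> 'I_n) :
  m = n -> injective g -> \det (mxsub g g A) = \det A.
Proof.
move=> e; subst m => g_inj; rewrite -(det_mxsub_perm (perm g_inj) A).
by congr (\det _); apply/matrixP => i j; rewrite !mxE !permE.
Qed.

Lemma char_poly_mxsub_inj (F : comNzRingType) n m (A : 'M[F]_n) (g : 'I_m -> 'I_n) :
  m = n -> injective g -> char_poly (mxsub g g A) = char_poly A.
Proof.
move=> e; subst m => g_inj; rewrite -(char_poly_mxsub_perm (perm g_inj) A).
by congr char_poly; apply/matrixP => i j; rewrite !mxE !permE.
Qed.

Lemma char_poly_horner0 (F : comNzRingType) n (A : 'M[F]_n) :
  (char_poly A).[0] = (-1) ^+ n * \det A.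
Proof. by rewrite horner_coef0 char_poly_det. Qed.

Lemma size_sub_monic (F : nzRingType) (p r : {poly F}) n :
  p \is monic -> r \is monic -> size p = n.+1 -> size r = n.+1 ->
  (size (p - r)%R <= n)%N.
Proof.
move=> p_monic r_monic size_p size_r; apply/leq_sizeP => j; rewrite coefB.
case: ltngtP => // [n_j|<-] _; first by rewrite !nth_default ?subrr ?size_p ?size_r.
have -> : p`_n = lead_coef p by rewrite lead_coefE size_p.
have -> : r`_n = lead_coef r by rewrite lead_coefE size_r.
by rewrite (monicP p_monic) (monicP r_monic) subrr.
Qed.

Section BorderExpansion.
Variables (F : comNzRingType) (m : nat) (B : 'M[F]_m.+1) (d : 'I_m -> F).

Local Notation C := (mxsub (lift ord_max) (lift ord_max) B).
Local Notation N t := (char_poly_mx (B *m diagf (extlast d t))).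

Definition border_poly : {poly F} :=
  \sum_i (B i ord_max)%:P * cofactor (N 0) i ord_max.

Lemma char_poly_mx_mul_diagf t :
  N t = \matrix_(i, j) ('X *+ (i == j) - (B i j * extlast d t j)%:P).
Proof. by apply/matrixP => i j; rewrite mul_mx_diag !mxE. Qed.

Lemma cofactor_last_indep t i : cofactor (N t) i ord_max = cofactor (N 0) i ord_max.
Proof.
rewrite /cofactor !char_poly_mx_mul_diagf; congr (_ * \det _).
by apply/matrixP => a b; rewrite !mxE !extlast_lift.
Qed.

Lemma cofactor_last_last t : cofactor (N t) ord_max ord_max = char_poly (C *m diagf d).
Proof.
rewrite /cofactor addnn -signr_odd odd_double mul1r; congr (\det _).
rewrite char_poly_mx_mul_diagf; apply/matrixP => a b.
by rewrite mul_mx_diag !mxE extlast_lift (inj_eq (@lift_inj _ _)).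
Qed.

Lemma char_poly_mul_diagf_extlast t :
  char_poly (B *m diagf (extlast d t)) = 'X * char_poly (C *m diagf d) - t%:P * border_poly.
Proof.
rewrite /char_poly (expand_det_col _ ord_max).
under eq_bigr => i _.
  have -> : N t i ord_max = 'X *+ (i == ord_max) - (B i ord_max * t)%:P.
    by rewrite char_poly_mx_mul_diagf mxE extlast_max.
  rewrite mulrBl cofactor_last_indep polyCM [(B i ord_max)%:P * _]mulrC -mulrA.
  over.
rewrite big_split /= sumrN -mulr_sumr; congr (_ - _).
rewrite (bigD1 ord_max) //= big1 ?addr0; last by move=> i /negbTE ->; rewrite mul0r.
by rewrite eqxx mulr1n cofactor_last_last.
Qed.

Lemma border_polyE :
  border_poly = 'X * char_poly (C *m diagf d) - char_poly (B *m diagf (extlast d 1)).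
Proof. by rewrite char_poly_mul_diagf_extlast mul1r opprB addrC subrK. Qed.

Lemma size_border_poly : (size border_poly <= m.+1)%N.
Proof.
rewrite border_polyE; apply: size_sub_monic; rewrite ?char_poly_monic ?size_char_poly //.
  by rewrite monicMl ?monicX ?char_poly_monic.
by rewrite mulrC size_mulX ?monic_neq0 ?char_poly_monic // size_char_poly.
Qed.

Lemma border_poly_horner0 : border_poly.[0] = (-1) ^+ m * \det B * \prod_i d i.
Proof.
rewrite border_polyE !hornerE !char_poly_horner0 det_mul_diagf prod_extlast mulr1.
by rewrite exprS; ring.
Qed.

End BorderExpansion.

Local Open Scope complex_scope.

Definition hurwitz_stable (R : rcfType) n (A : 'M[R]_n) : Prop :=
  hurwitz_poly (char_poly (cplx A)).

Lemma char_poly_cplx (R : rcfType) n (A : 'M[R]_n) :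
  char_poly (cplx A) = map_poly (real_complex R) (char_poly A).
Proof. by rewrite map_char_poly. Qed.

Lemma complex_gt0 (R : rcfType) (t : R[i]) : 0 < t -> exists2 u : R, 0 < u & t = u%:C.
Proof. by case: t => a b; rewrite ltcE /= => /andP [/eqP -> a0]; exists a. Qed.

Lemma hurwitz_stable_extlast (R : rcfType) m (B : 'M[R]_m.+1) (d : 'I_m -> R) :
  let C := mxsub (lift ord_max) (lift ord_max) B in
  (forall a, 0 < d a) -> hurwitz_stable (C *m diagf d) -> \det B * \det C < 0 ->
  exists2 t, 0 < t & hurwitz_stable (B *m diagf (extlast d t)).
Proof.
move=> C d_gt0 C_stable detBC.
set q := char_poly (C *m diagf d); set h := border_poly B d.
have detC0 : \det C != 0 by apply: contraTneq detBC => ->; rewrite mulr0 ltxx.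
have q_ratio : h.[0] / q.[0] = \det B / \det C.
  rewrite border_poly_horner0 char_poly_horner0 det_mul_diagf.
  field; rewrite detC0 signr_eq0 andbT lt0r_neq0 //.
  by apply: prodr_gt0 => i _.
rewrite /hurwitz_stable char_poly_cplx in C_stable.
have [tC tC0 stable] : exists2 tC, 0 < tC &
    hurwitz_poly ('X * map_poly (real_complex R) q - tC%:P * map_poly (real_complex R) h).
  apply: hurwitz_poly_perturbation => //.
  - by rewrite map_poly_eq0 monic_neq0 ?char_poly_monic.
  - by rewrite !size_map_poly size_char_poly size_border_poly.
  rewrite -(rmorph0 (real_complex R)) !horner_map -fmorph_div q_ratio.
  have /Creal_ReP -> : (\det B / \det C)%:C \is Num.real by rewrite complex_real.
  rewrite ltcR.
  have -> : \det B / \det C = \det B * \det C / \det C ^+ 2 by field.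
  by rewrite pmulr_llt0 // invr_gt0 exprn_even_gt0.
have [u u0 tCE] := complex_gt0 tC0.
exists u => //.
rewrite /hurwitz_stable char_poly_cplx char_poly_mul_diagf_extlast.
by rewrite rmorphB !rmorphM /= map_polyX map_polyC; rewrite tCE in stable.
Qed.

Lemma exists_notin_codom (T : finType) i (f : 'I_i -> T) (K : {set T}) :
  (i < #|K|)%N -> exists2 x, x \in K & x \notin codom f.
Proof.
move=> iK; apply/exists_inP; rewrite -negb_forall_in; apply: contraTN iK => /forall_inP K_f.
rewrite -leqNgt -[X in (_ <= X)%N](card_ord i) -(size_codom f); apply: leq_trans (card_size _).
by apply/subset_leq_card/subsetP.
Qed.

Lemma psub_reindex (R : rcfType) n (A : 'M[R]_n) (K : {set 'I_n}) i (f : 'I_i -> 'I_n) :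
  #|K| = i -> injective f -> (forall a, f a \in K) ->
  exists2 pi : 'I_#|K| -> 'I_i, injective pi & psub A K = mxsub pi pi (mxsub f f A).
Proof.
move=> cardK f_inj f_K.
have K_f x : x \in K -> x \in codom f.
  have codom_K : codom f \subset K by apply/subsetP => _ /codomP [a ->].
  have card_eq : #|codom f| = #|K| by rewrite card_codom // card_ord.
  by rewrite (subset_cardP card_eq codom_K).
exists (fun a => iinv (K_f _ (enum_valP a))) => [a b /(congr1 f)|].
  by rewrite !f_iinv => /enum_val_inj.
by apply/matrixP => a b; rewrite !mxE !f_iinv.
Qed.

Lemma det_mxsub_psub (R : rcfType) n (A : 'M[R]_n) (K : {set 'I_n}) i (f : 'I_i -> 'I_n) :
  #|K| = i -> injective f -> (forall a, f a \in K) ->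
  \det (mxsub f f A) = \det (psub A K).
Proof.
move=> cardK f_inj f_K; have [pi pi_inj ->] := psub_reindex A cardK f_inj f_K.
by rewrite (det_mxsub_inj _ cardK pi_inj).
Qed.

Lemma mulr_lt0_sgr_sign (R : realDomainType) (x y : R) i :
  Num.sg x = (-1) ^+ i.+1 -> Num.sg y = (-1) ^+ i -> x * y < 0.
Proof.
move=> sg_x sg_y; rewrite -(sgr_cp0 _).1.2 sgrM sg_x sg_y -exprD addSn addnn.
by rewrite exprS -signr_odd odd_double mulr1.
Qed.

Section PFFChain.
Variables (R : rcfType) (k : nat) (A : 'M[R]_k) (kap : nat -> {set 'I_k}).
Hypothesis kap_sg : forall i, (1 <= i <= k)%N ->
  #|kap i| = i /\ Num.sg (\det (psub A (kap i))) = (-1) ^+ i.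
Hypothesis kap_nested : forall i, (1 <= i < k)%N -> kap i \subset kap i.+1.

Lemma sgr_det_mxsub_chain i (f : 'I_i -> 'I_k) :
  (i <= k)%N -> injective f -> (forall a, f a \in kap i) ->
  Num.sg (\det (mxsub f f A)) = (-1) ^+ i.
Proof.
case: i f => [|i] f ik f_inj f_kap; first by rewrite det_mx00 sgr1.
by have [cardK sgK] := @kap_sg i.+1 ik; rewrite (det_mxsub_psub A cardK f_inj f_kap).
Qed.

Lemma PFF_chain_hurwitz i : (i <= k)%N ->
  exists f : 'I_i -> 'I_k, [/\ injective f, forall a, f a \in kap i &
    exists2 d : 'I_i -> R, (forall a, 0 < d a) & hurwitz_stable (mxsub f f A *m diagf d)].
Proof.
elim: i => [_|i IH ik].
  exists (widen_ord (leq0n k)); split => [[] // | [] // |].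
  by exists (fun=> 1) => // z; rewrite /char_poly det_mx00 (negbTE (root1 z)).
have [f [f_inj f_kap [d d_gt0 f_stable]]] := IH (ltnW ik).
have [cardK _] := @kap_sg i.+1 ik.
have [x x_kap x_f] : exists2 x, x \in kap i.+1 & x \notin codom f.
  by apply: exists_notin_codom; rewrite cardK.
set f' := extlast f x.
have f'_kap a : f' a \in kap i.+1.
  case: (unliftP ord_max a) => [b ->|->]; rewrite /f' ?extlast_lift ?extlast_max //.
  by apply: subsetP (f_kap b); rewrite kap_nested // (leq_trans _ (ltn_ord b)).
have f'_inj : injective f' := extlast_inj f_inj x_f.
have C_eq : mxsub (lift ord_max) (lift ord_max) (mxsub f' f' A) = mxsub f f A.
  by apply/matrixP => a b; rewrite !mxE /f' !extlast_lift.
have detBC : \det (mxsub f' f' A) * \det (mxsub f f A) < 0.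
  by apply: mulr_lt0_sgr_sign; apply: sgr_det_mxsub_chain => //; apply: ltnW.
rewrite -C_eq in f_stable detBC.
have [t t_gt0 stable] := hurwitz_stable_extlast d_gt0 f_stable detBC.
exists f'; split => //; exists (extlast d t) => // a.
by case: (unliftP ord_max a) => [b ->|->]; rewrite ?extlast_lift ?extlast_max.
Qed.
End PFFChain.

Lemma char_poly_cplx_mxsub_inj (R : rcfType) n m (A : 'M[R]_n) (g : 'I_m -> 'I_n) :
  m = n -> injective g -> char_poly (cplx (mxsub g g A)) = char_poly (cplx A).
Proof. by move=> mn g_inj; rewrite !char_poly_cplx char_poly_mxsub_inj. Qed.

Lemma posdiag_diagf (R : rcfType) n (d : 'I_n -> R) : (forall i, 0 < d i) -> posdiag (diagf d).
Proof. by move=> d_gt0; exists (\row_i d i); split => // i; rewrite mxE. Qed.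

Lemma mem_eigs (R : rcfType) n (A : 'M[R]_n) z : (z \in eigs A) = root (char_poly (cplx A)) z.
Proof.
rewrite /eigs; case: closed_field_poly_normal => s /= ->.
by rewrite (monicP (char_poly_monic _)) scale1r root_prod_XsubC.
Qed.

Lemma inertia_unstable_stable (R : rcfType) n (A B : 'M[R]_n) :
  hurwitz_unstable A -> hurwitz_stable B -> inertia A <> inertia B.
Proof.
move=> [z [root_z Re_z]] B_stable [_ count_eq _].
have : has (fun z : R[i] => 0 < 'Re z) (eigs A) by apply/hasP; exists z; rewrite ?mem_eigs.
rewrite has_count count_eq -has_count => /hasP [w].
by rewrite mem_eigs => /B_stable /lt_gtF ->.
Qed.

Theorem mainTheorem14 (R : rcfType) (M E k : nat)
    (s S : 'M[R]_(M, E)) (kap : 'I_k -> 'I_M) (J : 'I_k -> 'I_E) :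
  child_selection s kap J ->
  unstable_negative_feedback (CSmatrix S kap J) ->
  PFFminus (CSmatrix S kap J) ->
  DHopf (CSmatrix S kap J).
Proof.
set A := CSmatrix S kap J.
move=> _ [[A_unstable _] [detA0 _]] [P0 [kp [kp_det kp_nested]]].
have kp_sg i : (1 <= i <= k)%N -> #|kp i| = i /\ Num.sg (\det (psub A (kp i))) = (-1) ^+ i.
  by move=> ik; have [cardK detK] := kp_det i ik; rewrite P0 // cardK.
have [f [f_inj _ [d d_gt0 f_stable]]] := PFF_chain_hurwitz kp_sg kp_nested (leqnn k).
have cardT : #|[set: 'I_k]| = k by rewrite cardsT card_ord.
have [pi pi_inj AK] := psub_reindex A cardT f_inj (fun a => in_setT (f a)).
exists [set: 'I_k]; split.
  by rewrite AK (det_mxsub_inj _ cardT pi_inj) (det_mxsub_inj _ _ f_inj).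
exists (diagf (fun=> 1)), (diagf (d \o pi)); split; [|split].
- by apply: posdiag_diagf => _; rewrite ltr01.
- by apply: posdiag_diagf => i; apply: d_gt0.
apply: inertia_unstable_stable.
  have -> : diagf (fun=> 1) = 1%:M :> 'M[R]_#|[set: 'I_k]|.
    by apply/matrixP => i j; rewrite !mxE.
  by rewrite mulmx1 /hurwitz_unstable AK !char_poly_cplx_mxsub_inj.
by rewrite /hurwitz_stable AK -mxsub_mul_diagf char_poly_cplx_mxsub_inj.
Qed.
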